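(* A poset is a p-morphic image of an $n$-comb (for some $n$) if and only if it is a broken $m$-comb for some $m$.
   Context: A poset $P$ is an $n$-comb if $P=\{x_1,\dots,x_n\}\sqcup\{y_1,\dots,y_n\}$ with order given by: for each $z\in P$, $y_i\le z$ iff $y_i=z$; and $x_i\le z$ iff ($z=x_j$ with $i\le j$) or ($z=y_j$ with $i\le j$). (So $x_1<\dots<x_n$ is a chain and each $x_i$ lies below $y_j$ for $j\ge i$.) A broken $n$-comb is a subposet $Q\subseteq P$ of an $n$-comb $P$ with $\{x_1,\dots,x_n\}\subseteq Q$, with the induced order. A p-morphism $f:P\to Q$ is an order-preserving map such that whenever $f(x)\le y$ there is $x'\ge x$ with $f(x')=y$; $Q$ is a p-morphic image of $P$ if there is a surjective p-morphism. *)

From mathcomp Require Import all_boot all_order.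
Set Implicit Arguments. Unset Strict Implicit. Unset Printing Implicit Defensive.
Import Order.TTheory.

(* The n-comb: carrier 'I_n + 'I_n, with inl i = x_(i+1) and inr i = y_(i+1). *)
Definition comb (n : nat) : finType := ('I_n + 'I_n)%type.

Definition comb_le (n : nat) (a b : comb n) : bool :=
  match a, b with
  | inr i, inr j => i == j
  | inr _, inl _ => false
  | inl i, inl j => (i <= j)%N
  | inl i, inr j => (i <= j)%N
  end.

Definition pmorphism (A B : Type) (leA : A -> A -> bool) (leB : B -> B -> bool)
  (f : A -> B) : Prop :=
  (forall x y, leA x y -> leB (f x) (f y)) /\
  (forall x y, leB (f x) y -> exists2 x', leA x x' & f x' = y).

Definition pmorphic_image_of_comb (d : Order.disp_t) (T : porderType d) (n : nat) : Prop :=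
  exists f : comb n -> T,
    pmorphism (@comb_le n) (fun u v : T => (u <= v)%O) f /\ (forall t : T, exists z, f z = t).

Definition is_broken_comb (d : Order.disp_t) (T : porderType d) (m : nat) : Prop :=
  exists S : {set comb m},
    (forall i : 'I_m, (inl i : comb m) \in S) /\
    exists f : T -> comb m,
      injective f /\
      (forall z : comb m, z \in S <-> exists x, f x = z) /\
      (forall x y : T, (x <= y)%O <-> comb_le (f x) (f y)).

From mathcomp Require Import all_boot all_order.
Set Implicit Arguments. Unset Strict Implicit. Unset Printing Implicit Defensive.
Import Order.TTheory.

(* A broken m-comb S is a p-morphic image of the m-comb under a retraction:
   a missing tooth y_j is sent to the nearest surviving tooth y_k with k >= j,
   or to the top x_m of the spine when there is none.  Conversely, let f map
   the n-comb p-morphically onto P.  If f identifies two spine points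
   x_a < x_b, deleting the a-th spine point and tooth still gives a p-morphism
   onto P, since everything above x_a is already reached from x_b; so we may
   assume f is injective on the spine.  The teeth are maximal, so each element
   of P is the image of a unique spine point, or else of teeth only; in the
   latter case we represent it by the largest such tooth, and these
   representatives form a broken n-comb isomorphic to P. *)

Lemma comb_le_refl n (z : comb n) : comb_le z z.
Proof. by case: z => i /=. Qed.

Lemma comb_le_trans n (z1 z2 z3 : comb n) :
  comb_le z1 z2 -> comb_le z2 z3 -> comb_le z1 z3.
Proof.
case: z1 => [i|i]; case: z2 => [j|j]; case: z3 => [k|k] //=.
- exact: leq_trans.
- exact: leq_trans.
- by move=> ? /eqP <-.
- by move=> /eqP ->.
Qed.

Lemma comb_inr_maximal n (j : 'I_n) (z : comb n) : comb_le (inr j) z -> z = inr j.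
Proof. by case: z => // k /eqP ->. Qed.

Definition comb_idx n (z : comb n) : 'I_n := match z with inl i | inr i => i end.

Lemma comb_le_idx n (z z' : comb n) : comb_le z z' -> (comb_idx z <= comb_idx z')%N.
Proof. by case: z => i; case: z' => j //= /eqP ->. Qed.

Lemma comb_le_inl_idx n (z : comb n) : comb_le (inl (comb_idx z)) z.
Proof. by case: z => i /=. Qed.

Lemma comb_le_inl n (z z' : comb n) (i : 'I_n) :
  comb_le z z' -> comb_idx z != comb_idx z' -> (comb_idx z' <= i)%N ->
  comb_le z (inl i).
Proof.
case: z => k; case: z' => j //=; try by move=> kj _; exact: leq_trans.
by move=> /eqP ->; rewrite eqxx.
Qed.

Lemma pmorphism_maximal (A B : Type) (leA : A -> A -> bool) (leB : B -> B -> bool)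
    (f : A -> B) (x : A) (t : B) :
  pmorphism leA leB f -> (forall z, leA x z -> z = x) -> leB (f x) t -> t = f x.
Proof. by case=> _ back max_x /back [z /max_x -> <-]. Qed.

Lemma ltn_pred_ord m (j : 'I_m) : (m.-1 < m)%N.
Proof. by rewrite ltn_predL (leq_ltn_trans _ (ltn_ord j)). Qed.

(* The top of the spine; [j] only witnesses that 'I_m is nonempty. *)
Definition ord_last m (j : 'I_m) : 'I_m := Ordinal (ltn_pred_ord j).

Lemma leq_ord_last m (i j : 'I_m) : (i <= ord_last j)%N.
Proof. by rewrite /= -ltnS prednK ?ltn_ord // (leq_ltn_trans _ (ltn_ord j)). Qed.

Definition comb_retract m (S : {set comb m}) (z : comb m) : comb m :=
  match z with
  | inl i => inl i
  | inr j =>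
      if inr j \in S then inr j else
      if [pick k : 'I_m | (j <= k)%N && (inr k \in S)] is Some k then inr k
      else inl (ord_last j)
  end.

Section Retraction.
Variables (m : nat) (S : {set comb m}).
Hypothesis S_spine : forall i : 'I_m, (inl i : comb m) \in S.

Lemma comb_retract_in z : comb_retract S z \in S.
Proof. by case: z => [i|j] /=; [|case: ifP => // _; case: pickP => [k /andP[]|]]. Qed.

Lemma comb_retract_id z : z \in S -> comb_retract S z = z.
Proof. by case: z => [i|j] //= ->. Qed.

Lemma comb_retract_mono z z' :
  comb_le z z' -> comb_le (comb_retract S z) (comb_retract S z').
Proof.
case: z => i; case: z' => j //=; last by move=> /eqP ->; exact: comb_le_refl.
move=> le_ij; case: ifP => // _; case: pickP => [k /andP[le_jk _]|_] /=.
  exact: leq_trans le_jk.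
exact: leq_ord_last.
Qed.

Lemma comb_retract_inr_maximal j w :
  comb_le (comb_retract S (inr j)) w -> w \in S -> w = comb_retract S (inr j).
Proof.
rewrite /=; case: ifP => [_|y_jNS]; first by move=> /comb_inr_maximal.
case: pickP => [k _|none]; first by move=> /comb_inr_maximal.
case: w => [k|k] /= le_k wS.
  by congr inl; apply/val_inj/eqP; rewrite eqn_leq le_k leq_ord_last.
by move: (none k); rewrite wS (leq_trans (leq_ord_last j j) le_k).
Qed.

Lemma comb_retract_back z w : comb_le (comb_retract S z) w -> w \in S ->
  exists2 z', comb_le z z' & comb_retract S z' = w.
Proof.
case: z => [i|j] le_w wS; first by exists w; rewrite ?comb_retract_id.
by exists (inr j); [exact: comb_le_refl | exact/esym/comb_retract_inr_maximal].
Qed.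

End Retraction.

Lemma broken_comb_pmorphic_image d (T : porderType d) m :
  is_broken_comb T m -> pmorphic_image_of_comb T m.
Proof.
case=> S [S_spine [g [g_inj [g_onto g_le]]]].
have g_in t : g t \in S by apply/g_onto; exists t.
have g_ex z : exists t, g t == comb_retract S z.
  by case/g_onto: (comb_retract_in S_spine z) => t <-; exists t.
pose f z := xchoose (g_ex z).
have g_f z : g (f z) = comb_retract S z by apply/eqP; exact: (xchooseP (g_ex z)).
exists f; split; [split|].
- by move=> z z' le_zz'; apply/g_le; rewrite !g_f; exact: comb_retract_mono.
- move=> z t /g_le; rewrite g_f => le_t.
  have [z' le_zz' g_z'] := comb_retract_back le_t (g_in t).
  by exists z' => //; apply: g_inj; rewrite g_f.
- move=> t; exists (g t); apply: g_inj.
  by rewrite g_f comb_retract_id.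
Qed.

Section CombImage.
Variables (d : Order.disp_t) (T : porderType d) (n : nat) (f : comb n -> T).
Hypothesis f_pm : pmorphism (@comb_le n) (fun u v : T => (u <= v)%O) f.
Hypothesis f_onto : forall t : T, exists z, f z = t.
Hypothesis f_spine_inj : injective (fun a => f (inl a)).

Let f_mono := proj1 f_pm.
Let f_back := proj2 f_pm.

Lemma comb_image_inr_maximal j t : (f (inr j) <= t)%O -> t = f (inr j).
Proof. exact/pmorphism_maximal/comb_inr_maximal. Qed.

Lemma comb_image_spine_le a b : (f (inl a) <= f (inl b))%O = (a <= b)%N.
Proof.
apply/idP/idP => [le_ab|]; last exact: (@f_mono (inl a) (inl b)).
rewrite leqNgt; apply/negP => lt_ba.
have le_ba : (f (inl b) <= f (inl a))%O by apply: (@f_mono (inl b) (inl a)); exact: ltnW.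
have /f_spine_inj eq_ab : f (inl a) = f (inl b) by apply/le_anti; rewrite le_ab le_ba.
by move: lt_ba; rewrite eq_ab ltnn.
Qed.

Definition comb_repr (t : T) (z : comb n) : bool :=
  match z with
  | inl a => f (inl a) == t
  | inr j => [&& f (inr j) == t, ~~ [exists a, f (inl a) == t] &
               [forall k, (f (inr k) == t) ==> (k <= j)%N]]
  end.

Lemma comb_repr_f t z : comb_repr t z -> f z = t.
Proof. by case: z => [a /eqP|j /and3P[/eqP]]. Qed.

Lemma comb_repr_uniq t z z' : comb_repr t z -> comb_repr t z' -> z = z'.
Proof.
case: z => [a|j]; case: z' => [b|k] /=.
- by move=> /eqP <- /eqP/f_spine_inj ->.
- by move=> /eqP <- /and3P[_ /existsP []]; exists a.
- by move=> /and3P[_ /existsP no_spine _] /eqP fb; case: no_spine; exists b; rewrite fb.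
move=> /and3P[/eqP fj _ /forallP max_j] /and3P[/eqP fk _ /forallP max_k].
congr inr; apply/val_inj/eqP; rewrite eqn_leq.
by rewrite (implyP (max_j k)) ?fk // (implyP (max_k j)) ?fj.
Qed.

Lemma comb_repr_exists t : exists z, comb_repr t z.
Proof.
have [/existsP [a fa]|no_spine] := boolP [exists a, f (inl a) == t].
  by exists (inl a).
have [[a|j0] fz] := f_onto t.
  by case/existsP: no_spine; exists a; rewrite fz.
have fj0 : f (inr j0) == t by rewrite fz.
have [j fj max_j] := @arg_maxnP _ j0 (fun j => f (inr j) == t) val fj0.
exists (inr j); rewrite /= fj no_spine /=.
by apply/forallP => k; apply/implyP; exact: max_j.
Qed.

Lemma comb_repr_le t s z z' :
  comb_repr t z -> comb_repr s z' -> (t <= s)%O = comb_le z z'.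
Proof.
move=> rz rz'; have fz := comb_repr_f rz; have fz' := comb_repr_f rz'; subst t s.
case: z rz => [a|j] rz; case: z' rz' => [b|k] rz' /=.
- exact: comb_image_spine_le.
- case/and3P: rz' => _ no_spine /forallP max_k.
  apply/idP/idP => [/f_back [[c|c] le_ac fc] |]; last exact: (@f_mono (inl a) (inr k)).
    by case/existsP: no_spine; exists c; rewrite fc.
  by apply: leq_trans le_ac _; rewrite (implyP (max_k c)) ?fc.
- apply/negbTE/negP => /comb_image_inr_maximal fb.
  by case/and3P: rz => _ /existsP []; exists b; rewrite -fb.
- apply/idP/eqP => [/comb_image_inr_maximal fk | -> //].
  by rewrite fk in rz'; case: (comb_repr_uniq rz rz').
Qed.

Lemma comb_image_broken_comb : is_broken_comb T n.
Proof.
exists [set z | comb_repr (f z) z]; split; first by move=> i; rewrite inE /=.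
pose g t := xchoose (comb_repr_exists t).
have g_repr t : comb_repr t (g t) by exact: xchooseP.
have f_g t : f (g t) = t by exact: comb_repr_f.
exists g; split; [|split].
- by move=> t s eq_g; rewrite -(f_g t) -(f_g s) eq_g.
- move=> z; rewrite inE; split => [rz | [t <-]]; last by rewrite f_g.
  by exists (f z); exact: comb_repr_uniq (g_repr _) rz.
- by move=> t s; rewrite (comb_repr_le (g_repr t) (g_repr s)).
Qed.

End CombImage.

Definition comb_lift n (a : 'I_n.+1) (z : comb n) : comb n.+1 :=
  match z with inl i => inl (lift a i) | inr i => inr (lift a i) end.

Lemma comb_idx_lift n (a : 'I_n.+1) z : comb_idx (comb_lift a z) = lift a (comb_idx z).
Proof. by case: z. Qed.

Lemma comb_lift_le n (a : 'I_n.+1) z z' :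
  comb_le (comb_lift a z) (comb_lift a z') = comb_le z z'.
Proof.
by case: z => i; case: z' => j //=; rewrite ?leq_bump2 ?(inj_eq (@lift_inj _ a)).
Qed.

Lemma comb_lift_onto n (a : 'I_n.+1) z : comb_idx z != a -> exists w, comb_lift a w = z.
Proof.
case: z => i /=; case: (unliftP a i) => [j ->|->]; rewrite ?eqxx //.
- by exists (inl j).
- by exists (inr j).
Qed.

Lemma comb_lift_above n (a b : 'I_n.+1) z :
  (a < b)%N -> comb_le (inl b) z -> exists w, comb_lift a w = z.
Proof.
move=> lt_ab /comb_le_idx le_bz; apply: comb_lift_onto.
by rewrite neq_ltn (leq_trans lt_ab le_bz) orbT.
Qed.

Section CollapseSpine.
Variables (d : Order.disp_t) (T : porderType d) (n : nat) (f : comb n.+1 -> T).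
Hypothesis f_pm : pmorphism (@comb_le n.+1) (fun u v : T => (u <= v)%O) f.
Hypothesis f_onto : forall t : T, exists z, f z = t.
Variables (a b : 'I_n.+1).
Hypotheses (lt_ab : (a < b)%N) (f_ab : f (inl a) = f (inl b)).

Lemma collapse_reach t : (f (inl b) <= t)%O ->
  exists2 w, comb_le (inl b) (comb_lift a w) & f (comb_lift a w) = t.
Proof.
case: f_pm => _ back /back [z le_bz <-].
by have [w lift_w] := comb_lift_above lt_ab le_bz; exists w; rewrite lift_w.
Qed.

Lemma collapse_idx_above z : comb_idx z = a -> (f (inl b) <= f z)%O.
Proof. by case: f_pm => mono _ idx_z; rewrite -f_ab -idx_z; apply/mono/comb_le_inl_idx. Qed.

Lemma collapse_pmorphism :
  pmorphism (@comb_le n) (fun u v : T => (u <= v)%O) (fun z => f (comb_lift a z)).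
Proof.
case: f_pm => mono back; split=> [z z' le_zz' | c t /back [z le_cz <-]].
  by apply: mono; rewrite comb_lift_le.
have [idx_z | /comb_lift_onto [w lift_w]] := eqVneq (comb_idx z) a; last first.
  by exists w; rewrite -1?(comb_lift_le a) lift_w.
have [w le_bw f_w] := collapse_reach (collapse_idx_above idx_z).
exists w => //; rewrite -(comb_lift_le a); apply: comb_le_trans le_bw.
apply: comb_le_inl le_cz _ _; last by rewrite idx_z ltnW.
by rewrite comb_idx_lift idx_z eq_sym neq_lift.
Qed.

Lemma collapse_onto t : exists z, f (comb_lift a z) = t.
Proof.
have [z <-] := f_onto t.
have [idx_z | /comb_lift_onto [w <-]] := eqVneq (comb_idx z) a; last by exists w.
by have [w _ f_w] := collapse_reach (collapse_idx_above idx_z); exists w.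
Qed.

End CollapseSpine.

Lemma comb_image_spine_inj d (T : porderType d) n :
  pmorphic_image_of_comb T n ->
  exists m (f : comb m -> T),
    [/\ pmorphism (@comb_le m) (fun u v : T => (u <= v)%O) f,
        forall t, exists z, f z = t & injective (fun a => f (inl a))].
Proof.
elim: n => [|n IHn] [f [f_pm f_onto]]; first by exists 0, f; split=> // [[]].
have [/injectiveP f_inj | /injectivePn [a [b neq_ab f_ab]]] :=
  boolP (injectiveb (fun a => f (inl a))); first by exists n.+1, f.
wlog lt_ab : a b f_ab {neq_ab} / (a < b)%N.
  move=> IH; move: neq_ab; rewrite -(inj_eq val_inj) neq_ltn => /orP[lt_ab | lt_ba].
  - exact: IH f_ab lt_ab.
  - exact: IH (esym f_ab) lt_ba.
apply: IHn; exists (fun z => f (comb_lift a z)); split.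
- exact (collapse_pmorphism f_pm lt_ab f_ab).
- exact (collapse_onto f_pm f_onto lt_ab f_ab).
Qed.

Theorem mainTheorem8 (d : Order.disp_t) (T : porderType d) :
  (exists n : nat, pmorphic_image_of_comb T n) <->
  (exists m : nat, is_broken_comb T m).
Proof.
split=> [[n /comb_image_spine_inj [m [f [f_pm f_onto f_inj]]]] | [m broken]].
  by exists m; exact: comb_image_broken_comb f_pm f_onto f_inj.
by exists m; exact: broken_comb_pmorphic_image.
Qed.
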